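(* Let $K$ be a field of characteristic $\neq2$ and let $\tau=(-1,1,1,-1)$ or $\tau=(1,-1,-1,1)$. Then $\mathrm{Aut}\,A_\tau=G_3$, where $$G_3=\{\varphi\in\mathrm{Aut}\,K\langle x_1,x_2\rangle\mid \varphi=(\alpha_1x_1,\beta_2x_2)\ \text{or}\ \varphi=(\beta_1x_2,\alpha_2x_1),\ \alpha_1,\beta_2,\alpha_2,\beta_1\in K^*\}.$$
   Context: $A=K\langle x_1,x_2\rangle$ is the free associative algebra with unit on $x_1,x_2$; $\varphi=(f_1,f_2)$ denotes the algebra endomorphism with $\varphi(x_1)=f_1$, $\varphi(x_2)=f_2$. For $q_{ij}\in K$, the diagonal braiding $\tau=(q_{11},q_{12},q_{21},q_{22})$ on $A$ is the linear map $A\otimes A\to A\otimes A$ given on words $u,v$ by $(u\otimes v)\tau=q_{11}^{s_1t_1}q_{12}^{s_1t_2}q_{21}^{s_2t_1}q_{22}^{s_2t_2}\,(v\otimes u)$, where $s_i$ (resp. $t_i$) is the number of occurrences of $x_i$ in $u$ (resp. $v$). $A_\tau$ is $A$ equipped with $\tau$, and $\mathrm{Aut}\,A_\tau$ is the group of algebra automorphisms $\varphi$ of $A$ satisfying $(\varphi\otimes\varphi)((w)\tau)=((\varphi\otimes\varphi)(w))\tau$ for all $w\in A\otimes A$, viewed as a subgroup of $\mathrm{Aut}\,K\langle x_1,x_2\rangle$. *)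

From HB Require Import structures.
From mathcomp Require Import all_boot all_order all_algebra.
From mathcomp Require Import finmap.
From mathcomp.multinomials Require Import monalg.
Set Implicit Arguments. Unset Strict Implicit. Unset Printing Implicit Defensive.
Import Order.TTheory GRing.Theory Num.Theory.
Local Open Scope ring_scope.

Section FreeAlg.
Variable K : fieldType.

(* words in x_1, x_2 : letter (0 : 'I_2) is x_1, letter (1 : 'I_2) is x_2 *)
Definition word := {fmonom 'I_2}.

(* A = K<x_1,x_2> : free associative algebra with unit, basis = words *)
Definition FA := {malg K[word]}.

(* A (x) A, with basis the pairs (u, v) standing for u (x) v *)
Definition FA2 := {malg K[(word * word)%type]}.

Definition gen (i : 'I_2) : FA := << fmu i >>.
Definition x1 : FA := gen 0.
Definition x2 : FA := gen 1.

(* the algebra endomorphism phi = (f1, f2): phi(x_1) = f1, phi(x_2) = f2 *)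
Definition endo (f1 f2 : FA) (p : FA) : FA :=
  \sum_(m <- msupp p)
     p@_m *: \prod_(i <- (m : seq 'I_2)) (if i == 0 then f1 else f2).

Definition tens (a b : FA) : FA2 :=
  \sum_(u <- msupp a) \sum_(v <- msupp b) << a@_u * b@_v *g (u, v) >>.

Definition endo2 (f1 f2 : FA) (w : FA2) : FA2 :=
  \sum_(uv <- msupp w) w@_uv *: tens (endo f1 f2 << uv.1 >>) (endo f1 f2 << uv.2 >>).

Definition bcoef (q11 q12 q21 q22 : K) (u v : word) : K :=
  let s1 := count_mem (0 : 'I_2) (u : seq 'I_2) in
  let s2 := count_mem (1 : 'I_2) (u : seq 'I_2) in
  let t1 := count_mem (0 : 'I_2) (v : seq 'I_2) in
  let t2 := count_mem (1 : 'I_2) (v : seq 'I_2) in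
  q11 ^+ (s1 * t1) * q12 ^+ (s1 * t2) * q21 ^+ (s2 * t1) * q22 ^+ (s2 * t2).

(* the diagonal braiding tau : (u (x) v) tau = bcoef u v (v (x) u) *)
Definition braid (q11 q12 q21 q22 : K) (w : FA2) : FA2 :=
  \sum_(uv <- msupp w) << w@_uv * bcoef q11 q12 q21 q22 uv.1 uv.2 *g (uv.2, uv.1) >>.

Definition is_aut (f1 f2 : FA) : Prop := bijective (endo f1 f2).

Definition in_Aut_tau (q11 q12 q21 q22 : K) (f1 f2 : FA) : Prop :=
  is_aut f1 f2 /\
  forall w : FA2,
    endo2 f1 f2 (braid q11 q12 q21 q22 w) = braid q11 q12 q21 q22 (endo2 f1 f2 w).

Definition in_G3 (f1 f2 : FA) : Prop :=
  is_aut f1 f2 /\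
  ((exists a1 b2 : K, [/\ a1 != 0, b2 != 0, f1 = a1 *: x1 & f2 = b2 *: x2]) \/
   (exists b1 a2 : K, [/\ b1 != 0, a2 != 0, f1 = b1 *: x2 & f2 = a2 *: x1])).

End FreeAlg.

From HB Require Import structures.
From mathcomp Require Import all_boot all_order all_algebra.
From mathcomp Require Import finmap.
From mathcomp.multinomials Require Import monalg.
From mathcomp Require Import zify ring.
Import GRing.Theory.
Set Implicit Arguments. Unset Strict Implicit.
Local Open Scope ring_scope.

(* For these tau the braiding scalar of two words is a sign depending only on the parities
   of their letter counts, through a nondegenerate bilinear form over F_2 (char K <> 2 lets
   us read off the sign). Testing the braid relation on x_i (x) x_j forces the words of
   phi(x_1) to share one parity class and those of phi(x_2) another, the two classes being
   independent. Words with independent parities form a code, so the leading word (for a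
   shortlex order) of phi(p) is the substitution of the leading words u_1, u_2 of phi(x_1),
   phi(x_2) into a word of p; as phi is onto, each letter arises this way, whence
   {u_1, u_2} = {x_1, x_2}, and the parity constraint leaves only multiples of these letters.
   Conversely, diagonal and antidiagonal maps relabel letters, which preserves the braiding
   scalars. *)

(** * Shortlex rank of binary words *)

Definition bin_step (n : nat) (i : 'I_2) : nat := (n * 2 + i)%N.

(* [rank s] reads [1 :: s] as a binary numeral: words are ranked by length, then
   lexicographically, and the ranking is compatible with concatenation. *)
Definition rank (s : seq 'I_2) : nat := foldl bin_step 1 s.

Lemma foldl_bin_stepE a t :
  foldl bin_step a t = (a * 2 ^ size t + foldl bin_step 0 t)%N.
Proof.
elim: t a => [|i t IH] a /=; first by rewrite muln1 addn0.
by rewrite IH [foldl _ (bin_step 0 i) t]IH {1 3}/bin_step expnS; lia.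
Qed.

Lemma bin_lt_exp t : (foldl bin_step 0 t < 2 ^ size t)%N.
Proof.
elim: t => [|i t IH] //=; rewrite foldl_bin_stepE expnS {1}/bin_step.
have := ltn_ord i; nia.
Qed.

Lemma rankE s : rank s = (2 ^ size s + foldl bin_step 0 s)%N.
Proof. by rewrite /rank foldl_bin_stepE mul1n. Qed.

Lemma rank_cat u v : rank (u ++ v) = ((rank u).-1 * 2 ^ size v + rank v)%N.
Proof.
rewrite {1}/rank foldl_cat foldl_bin_stepE -/(rank u) (rankE v).
have := rankE u; have := expn_gt0 2 (size u); nia.
Qed.

Lemma rank_size_leq u v : (rank u <= rank v)%N -> (size u <= size v)%N.
Proof.
rewrite !rankE => h; rewrite leqNgt; apply/negP => lt_vu.
have : (2 ^ (size v).+1 <= 2 ^ size u)%N by rewrite leq_exp2l.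
by rewrite expnS; have := bin_lt_exp v; lia.
Qed.

Lemma rank_gt0 s : (0 < rank s)%N.
Proof. by rewrite rankE addn_gt0 expn_gt0. Qed.

Lemma rank_rcons s i : rank (rcons s i) = (rank s * 2 + i)%N.
Proof. by rewrite /rank -cats1 foldl_cat. Qed.

Lemma rank_inj : injective rank.
Proof.
elim/last_ind => [|s i IH] t; case/lastP: t => [|t j]; rewrite ?rank_rcons //.
- have := rank_gt0 t; rewrite [rank [::]]/rank /=; lia.
- have := rank_gt0 s; rewrite [rank [::]]/rank /=; lia.
have := ltn_ord i; have := ltn_ord j => hj hi E.
have -> : i = j by apply: ord_inj; lia.
by rewrite (IH t) //; lia.
Qed.

Lemma rank_catl u u' v : (rank u < rank u')%N -> (rank (u ++ v) < rank (u' ++ v))%N.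
Proof.
rewrite !rank_cat; have := rank_gt0 u; have := expn_gt0 2 (size v); nia.
Qed.

Lemma rank_catr u v v' : (rank v < rank v')%N -> (rank (u ++ v) < rank (u ++ v'))%N.
Proof.
move=> lt_v; rewrite !rank_cat.
have : (2 ^ size v <= 2 ^ size v')%N by rewrite leq_exp2l // rank_size_leq // ltnW.
nia.
Qed.

Lemma rank_cat_leq a b u v : (rank a <= rank u)%N -> (rank b <= rank v)%N ->
  (rank (a ++ b) <= rank (u ++ v) ?= iff (a == u) && (b == v))%N.
Proof.
have lt_rank x y : (rank x <= rank y)%N -> x != y -> (rank x < rank y)%N.
  by move=> le_xy ne_xy; rewrite ltn_neqAle (inj_eq rank_inj) ne_xy.
move=> le_a le_b; case: (eqVneq a u) => [<-|/(lt_rank _ _ le_a) lt_a] /=.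
  case: (eqVneq b v) => [<-|/(lt_rank _ _ le_b) lt_b]; first exact: leqif_refl.
  by split; [exact/ltnW/rank_catr | rewrite (ltn_eqF (rank_catr a lt_b))].
have le_ub : (rank (u ++ b) <= rank (u ++ v))%N.
  by case: (eqVneq b v) => [<- // | /(lt_rank _ _ le_b)/(rank_catr u)/ltnW].
have lt_ab := leq_trans (rank_catl b lt_a) le_ub.
by split; [exact: ltnW | rewrite (ltn_eqF lt_ab)].
Qed.

(** * Parities and substitution of words *)

Lemma ord2_cases (i : 'I_2) : i = 0 \/ i = 1.
Proof. by case: i => [[|[|]]] // ?; [left|right]; apply: val_inj. Qed.

Definition parity (s : seq 'I_2) : bool * bool :=
  (odd (count_mem (0 : 'I_2) s), odd (count_mem (1 : 'I_2) s)).

Definition parity_indep (a b : seq 'I_2) : bool :=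
  [&& parity a != (false, false), parity b != (false, false) & parity a != parity b].

Lemma parity_cat s t :
  parity (s ++ t) = ((parity s).1 (+) (parity t).1, (parity s).2 (+) (parity t).2).
Proof. by rewrite /parity !count_cat !oddD. Qed.

Lemma parity_rev_ord s : parity (map (@rev_ord 2) s) = ((parity s).2, (parity s).1).
Proof.
rewrite /parity !count_map; congr (odd _, odd _); apply: eq_count => i /=;
  by case: (ord2_cases i) => ->.
Qed.

Lemma parity_size1_inj (s t : seq 'I_2) :
  (size s <= 1)%N -> size t = 1%N -> parity s = parity t -> s = t.
Proof.
case: s => [|i [|]] // _; case: t => [|j []] //= _.
  by case: (ord2_cases j) => ->.
by case: (ord2_cases i) (ord2_cases j) => -> [] ->.
Qed.

Lemma parity_indepC a b : parity_indep a b = parity_indep b a.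
Proof.
rewrite /parity_indep; case: (parity a) (parity b) => [x y] [z w].
by case: x; case: y; case: z; case: w.
Qed.

Lemma parity_indep_catr a c : parity_indep a (a ++ c) -> parity_indep a c.
Proof.
rewrite /parity_indep parity_cat; case: (parity a) (parity c) => [x y] [z w].
by case: x; case: y; case: z; case: w.
Qed.

Lemma parity_indep_neq0 a b : parity_indep a b -> a != [::] /\ b != [::].
Proof. by case/and3P; case: a; case: b. Qed.

Definition wsubst (a b m : seq 'I_2) : seq 'I_2 :=
  flatten [seq if i == 0 then a else b | i <- m].

Lemma wsubst_cons a b i m :
  wsubst a b (i :: m) = (if i == 0 then a else b) ++ wsubst a b m.
Proof. by []. Qed.

Lemma wsubstC a b m : wsubst b a m = wsubst a b (map (@rev_ord 2) m).
Proof.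
by elim: m => //= i m IH; rewrite !wsubst_cons IH; case: (ord2_cases i) => ->.
Qed.

Lemma wsubst_catr a c m :
  wsubst a (a ++ c) m = wsubst a c (wsubst [:: 0] [:: 0; 1] m).
Proof.
elim: m => // i m IH; rewrite !wsubst_cons IH.
by case: (ord2_cases i) => -> /=; rewrite !wsubst_cons //= catA.
Qed.

(* Words with independent parities form a code: two factorizations starting with different
   letters cannot agree, since the shorter one is a proper prefix of the longer. *)
Lemma wsubst_head_neq a b m m' : parity_indep a b ->
  a ++ wsubst a b m != b ++ wsubst a b m'.
Proof.
move: {2}(size a + size b)%N (leqnn (size a + size b)) => n.
elim: n a b m m' => [|n IH] a b m m'.
  by move=> + /parity_indep_neq0[]; case: a.
wlog le_ab : a b m m' / (size a <= size b)%N.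
  move=> W le_n ind; case: (leqP (size a) (size b)) => [le_ab|/ltnW le_ba].
    exact: W.
  rewrite eq_sym -[m](mapK (@rev_ordK 2)) -[m'](mapK (@rev_ordK 2)).
  rewrite -(wsubstC a b (map _ m)) -(wsubstC a b (map _ m')).
  by apply: W; rewrite 1?addnC // parity_indepC.
move=> le_n ind; apply/eqP => E.
set c := drop (size a) b.
have def_b : b = a ++ c.
  have : take (size a) (a ++ wsubst a b m) = take (size a) (b ++ wsubst a b m').
    by rewrite E.
  by rewrite take_size_cat // takel_cat // => ->; rewrite cat_take_drop.
clearbody c.
have ind_ac : parity_indep a c by apply: parity_indep_catr; rewrite -def_b.
have [a_neq0 c_neq0] := parity_indep_neq0 ind_ac.
have Em : wsubst a b m = c ++ wsubst a b m'.
  by apply/eqP; move: E; rewrite def_b -catA => /eqP; rewrite eqseq_cat // => /andP[].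
have le_n' : (size a + size c <= n)%N.
  have a_pos : (0 < size a)%N by rewrite lt0n size_eq0.
  by move: le_n a_pos; rewrite def_b size_cat; move: (size a) (size c); lia.
rewrite def_b !(wsubst_catr a c) in Em.
clear E; case: m Em => [|i m]; first by case: (c) c_neq0.
rewrite wsubst_cons; case: (ord2_cases i) => ->; rewrite /= !wsubst_cons /= => Em.
  exact: negP (IH a c _ _ le_n' ind_ac) (introT eqP Em).
exact: negP (IH a c (1 :: _) _ le_n' ind_ac) (introT eqP Em).
Qed.

Lemma wsubst_eq_nil a b m : parity_indep a b -> wsubst a b m = [::] -> m = [::].
Proof.
case/parity_indep_neq0 => a_neq0 b_neq0; case: m => //= i m.
by case: (ord2_cases i) => -> /=; [case: a a_neq0 | case: b b_neq0].
Qed.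

Lemma wsubst_inj a b : parity_indep a b -> injective (wsubst a b).
Proof.
move=> ind; elim=> [|i m IH] [|j m'] //.
- by move/esym/(wsubst_eq_nil ind).
- by move/(wsubst_eq_nil ind).
rewrite !wsubst_cons; case: (eqVneq i j) => [<- | ne_ij E].
  by move/eqP; rewrite eqseq_cat // => /andP[_ /eqP/IH ->].
exfalso; move: ne_ij E; case: (ord2_cases i) (ord2_cases j) => -> [] -> //= _ E.
  by move: (wsubst_head_neq m m' ind); rewrite E eqxx.
by move: (wsubst_head_neq m' m ind); rewrite E eqxx.
Qed.

Lemma wsubst_letter a b m k : parity_indep a b -> wsubst a b m = [:: k] ->
  exists i, m = [:: i] /\ (if i == 0 then a else b) = [:: k].
Proof.
move=> ind; have [a_neq0 b_neq0] := parity_indep_neq0 ind.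
case: m => [|i m] //; rewrite wsubst_cons => E; exists i.
have : (if i == 0 then a else b) != [::] by case: (i == 0).
by move: E; case: (if i == 0 then a else b) => [|x [|y s]] //= [<- /(wsubst_eq_nil ind) ->].
Qed.

Lemma sum_seq_delta (T : eqType) (V : nmodType) (s : seq T) (x : T) (F : T -> V) :
  uniq s -> \sum_(a <- s) (if a == x then F a else 0) = if x \in s then F x else 0.
Proof.
elim: s => [|a s IH] /=; first by rewrite big_nil.
case/andP=> a_notin_s uniq_s; rewrite big_cons IH // in_cons [a == x]eq_sym.
by case: (eqVneq x a) => [->|_] /=; rewrite ?(negbTE a_notin_s) ?addr0 ?add0r.
Qed.

Lemma seq_argmax (T : eqType) (s : seq T) (g : T -> nat) x0 : x0 \in s ->
  exists2 x, x \in s & forall y, y \in s -> (g y <= g x)%N.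
Proof.
elim: s x0 => // a s IH x0 _.
case: s IH => [_|b s IH]; first by exists a => [|y]; rewrite ?mem_seq1 // => /eqP->.
have [x x_s max_x] := IH b (mem_head _ _).
case: (leqP (g a) (g x)) => [le_ax | /ltnW le_xa].
  by exists x => [|y]; rewrite in_cons ?x_s ?orbT // => /predU1P[->|/max_x].
exists a => [|y]; first exact: mem_head.
by rewrite in_cons => /predU1P[->//|/max_x/leq_trans]; apply.
Qed.

Lemma msupp_nonempty (T : monomType) (V : zmodType) (p : {malg V[T]}) :
  p != 0 -> exists k, k \in msupp p.
Proof.
move=> p_neq0; case: (fset_0Vmem (msupp p)) => [E|[k k_p]]; last by exists k.
by move: p_neq0; rewrite -msupp_eq0 E eqxx.
Qed.

(** * Leading words *)

Section LeadingWords.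
Variable K : fieldType.
Implicit Types (f g p : FA K) (u v w : word) (c d : K).

Definition lead_word f u c : Prop :=
  [/\ c != 0, f@_u = c & forall w, (rank u < rank w)%N -> f@_w = 0].

Lemma lead_word_supp f u c w : lead_word f u c -> w \in msupp f -> (rank w <= rank u)%N.
Proof.
case=> _ _ above_u; rewrite -mcoeff_neq0; apply: contraR.
by rewrite -ltnNge => /above_u ->; rewrite eqxx.
Qed.

Lemma lead_word_uniq f u u' c c' : lead_word f u c -> lead_word f u' c' -> u = u'.
Proof.
case=> c_neq0 fu above_u [c'_neq0 fu' above_u']; apply/val_inj/rank_inj.
case: (ltngtP (rank u) (rank u')) => // lt_u.
  by move: c'_neq0; rewrite -fu' above_u // eqxx.
by move: c_neq0; rewrite -fu above_u' // eqxx.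
Qed.

Lemma lead_wordU u : lead_word (<< u >> : FA K) u 1.
Proof.
split; [exact: oner_neq0 | by rewrite mcoeffU1 eqxx |].
by move=> w lt_uw; rewrite mcoeffU1; case: eqP => // eq_uw; rewrite eq_uw ltnn in lt_uw.
Qed.

Lemma lead_wordM f g u v c d : lead_word f u c -> lead_word g v d ->
  lead_word (f * g) (mmul u v) (c * d).
Proof.
move=> lead_f lead_g; have [c_neq0 fu _] := lead_f; have [d_neq0 gv _] := lead_g.
have u_f : u \in msupp f by rewrite -mcoeff_neq0 fu.
have v_g : v \in msupp g by rewrite -mcoeff_neq0 gv.
have eq_uv k1 k2 : k1 \in msupp f -> k2 \in msupp g ->
    (rank (mmul u v) <= rank (mmul k1 k2))%N -> k1 = u /\ k2 = v.
  move=> k1_f k2_g; rewrite !fmM.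
  have [le_k eq_k] := rank_cat_leq (lead_word_supp lead_f k1_f) (lead_word_supp lead_g k2_g).
  move=> ge_k; have : rank (k1 ++ k2) == rank (u ++ v) by rewrite eqn_leq le_k ge_k.
  by rewrite eq_k => /andP[/eqP/val_inj-> /eqP/val_inj->].
have coefM w : (rank (mmul u v) <= rank w)%N -> (f * g)@_w = c * d *+ (w == mmul u v).
  move=> le_w; rewrite mcoeffMl.
  rewrite (eq_big_seq (fun k1 => if k1 == u then c * d *+ (w == mmul u v) else 0)).
    by rewrite sum_seq_delta ?fset_uniq // u_f.
  move=> k1 k1_f.
  rewrite (eq_big_seq (fun k2 => if k2 == v then
      (if k1 == u then c * d *+ (w == mmul u v) else 0) else 0)).
    by rewrite sum_seq_delta ?fset_uniq // v_g.
  move=> k2 k2_g; case: eqP => [Ew | nEw]; last first.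
    rewrite mulr0n; case: (eqVneq k2 v) => [?|] //=; case: (eqVneq k1 u) => [?|] //=.
    by subst k1 k2; rewrite eq_sym (introF eqP nEw).
  have [] := eq_uv k1 k2 k1_f k2_g; first by rewrite Ew.
  by move=> Ek1 Ek2; subst k1 k2; rewrite !eqxx fu gv -Ew eqxx.
split; first by rewrite mulf_neq0.
  by rewrite coefM // eqxx.
move=> w lt_w; rewrite coefM ?(ltnW lt_w) //.
by have /negPf-> : w != mmul u v by apply: contraTneq lt_w => ->; rewrite ltnn.
Qed.

Lemma lead_word1 : lead_word 1 mone 1.
Proof.
split; [exact: oner_neq0 | by rewrite mcoeff1 eqxx |].
by move=> w lt_w; rewrite mcoeff1; case: eqP => // eq_w; rewrite eq_w ltnn in lt_w.
Qed.

Lemma lead_word_exists f : f != 0 -> exists u, lead_word f u f@_u.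
Proof.
move=> /msupp_nonempty[u0 u0_f].
have [u u_f max_u] := @seq_argmax _ (msupp f) (fun u : word => rank u) u0 u0_f.
exists u; split => //; first by rewrite mcoeff_neq0.
move=> w lt_w; apply/eqP; rewrite mcoeff_eq0.
by apply: contraTN lt_w => /max_u; rewrite -leqNgt.
Qed.

Section Substitution.
Variables (f1 f2 : FA K) (u1 u2 : word) (c1 c2 : K).
Hypotheses (lead1 : lead_word f1 u1 c1) (lead2 : lead_word f2 u2 c2).

Lemma lead_word_prod (m : seq 'I_2) :
  lead_word (\prod_(i <- m) (if i == 0 then f1 else f2)) (FMonom (wsubst u1 u2 m))
            (\prod_(i <- m) (if i == 0 then c1 else c2)).
Proof.
elim: m => [|i m IH].
  rewrite !big_nil (_ : FMonom _ = mone); first exact: lead_word1.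
  by apply: val_inj; rewrite /= fm1.
rewrite !big_cons; have -> : FMonom (wsubst u1 u2 (i :: m)) =
    mmul (if i == 0 then u1 else u2) (FMonom (wsubst u1 u2 m)).
  by apply/eqP; rewrite fmP fmM wsubst_cons /=; case: (i == 0).
by apply: lead_wordM IH; case: (i == 0).
Qed.

Lemma lead_word_endo p : injective (wsubst u1 u2) -> p != 0 ->
  exists m c, lead_word (endo f1 f2 p) (FMonom (wsubst u1 u2 m)) c.
Proof.
move=> subst_inj /msupp_nonempty[m0 m0_p].
have [m m_p max_m] := @seq_argmax _ (msupp p) (fun m : word => rank (wsubst u1 u2 m)) m0 m0_p.
have lt_m m' : m' \in msupp p -> m' != m ->
    (rank (wsubst u1 u2 m') < rank (wsubst u1 u2 m))%N.
  move=> m'_p ne_m; rewrite ltn_neqAle max_m // andbT.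
  by apply: contraNneq ne_m => /rank_inj/subst_inj/val_inj->.
pose cm := \prod_(i <- (m : seq 'I_2)) (if i == 0 then c1 else c2).
have [cm_neq0 _ _] := lead_word_prod m.
exists m, (p@_m * cm); split.
- by rewrite mulf_neq0 // mcoeff_neq0.
- rewrite /endo raddf_sum (eq_big_seq (fun m' => if m' == m then p@_m * cm else 0)).
    by rewrite sum_seq_delta ?fset_uniq // m_p.
  move=> m' m'_p /=; rewrite mcoeffZ; case: eqP => [->|/eqP ne_m].
    by have [_ -> _] := lead_word_prod m.
  have [_ _ ->] := lead_word_prod m'; first by rewrite mulr0.
  exact: lt_m.
- move=> w lt_w; rewrite /endo raddf_sum big1_seq //= => m' m'_p.
  rewrite mcoeffZ; have [_ _ ->] := lead_word_prod m'; first by rewrite mulr0.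
  exact: leq_ltn_trans (max_m _ m'_p) lt_w.
Qed.
End Substitution.

End LeadingWords.

Section Coefficients.
Variable K : fieldType.
Implicit Types (a b : FA K) (w : FA2 K) (u v : word) (c : K).

Lemma endoU (f1 f2 : FA K) u :
  endo f1 f2 << u >> = \prod_(i <- (u : seq 'I_2)) (if i == 0 then f1 else f2).
Proof. by rewrite /endo msuppU1 big_seq_fset1 mcoeffU1 eqxx scale1r. Qed.

Lemma endo_letter (f1 f2 : FA K) i : endo f1 f2 << fmu i >> = if i == 0 then f1 else f2.
Proof. by rewrite endoU fmU big_seq1. Qed.

Lemma endo0 (f1 f2 : FA K) : endo f1 f2 0 = 0.
Proof. by rewrite /endo msupp0 big_seq_fset0. Qed.

Lemma tens_coef a b u v : (tens a b)@_(u, v) = a@_u * b@_v.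
Proof.
rewrite /tens raddf_sum /= (eq_bigr (fun x => if x == u then
   (if v \in msupp b then a@_u * b@_v else 0) else 0)); last first.
  move=> x _; rewrite raddf_sum /= (eq_bigr (fun y => if y == v then
     (if x == u then a@_u * b@_v else 0) else 0)); last first.
    move=> y _; rewrite mcoeffU xpair_eqE.
    by case: (eqVneq x u) => [->|]; case: (eqVneq y v) => [->|].
  by rewrite sum_seq_delta ?fset_uniq //; case: (x == u); case: (_ \in _).
rewrite sum_seq_delta ?fset_uniq //.
case: (boolP (u \in msupp a)) => [_|/mcoeff_outdom ->]; last by rewrite mul0r.
by case: (boolP (v \in msupp b)) => [_|/mcoeff_outdom ->]; last by rewrite mulr0.
Qed.

Lemma braid_coef (q11 q12 q21 q22 : K) w u v :
  (braid q11 q12 q21 q22 w)@_(u, v) = w@_(v, u) * bcoef q11 q12 q21 q22 v u.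
Proof.
rewrite /braid raddf_sum /= (eq_bigr (fun k => if k == (v, u) then
   w@_(v, u) * bcoef q11 q12 q21 q22 v u else 0)); last first.
  case=> [k1 k2] _; rewrite mcoeffU !xpair_eqE /=.
  by case: (eqVneq k1 v) => [->|]; case: (eqVneq k2 u) => [->|]; rewrite ?andbF.
rewrite sum_seq_delta ?fset_uniq //.
by case: (boolP ((v, u) \in msupp w)) => [_|/mcoeff_outdom ->]; last by rewrite mul0r.
Qed.

Lemma endo2_coef (f1 f2 : FA K) w u v : (endo2 f1 f2 w)@_(u, v) =
  \sum_(k <- msupp w) w@_k * ((endo f1 f2 << k.1 >>)@_u * (endo f1 f2 << k.2 >>)@_v).
Proof. by rewrite /endo2 raddf_sum /=; apply: eq_bigr => k _; rewrite mcoeffZ tens_coef. Qed.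

Lemma endo2U (f1 f2 : FA K) c (k : word * word) :
  endo2 f1 f2 << c *g k >> = c *: tens (endo f1 f2 << k.1 >>) (endo f1 f2 << k.2 >>).
Proof.
rewrite /endo2 msuppU; case: eqP => [->|_]; first by rewrite big_seq_fset0 scale0r.
by rewrite big_seq_fset1 mcoeffUU.
Qed.

Lemma braidU (q11 q12 q21 q22 : K) c (k : word * word) :
  braid q11 q12 q21 q22 << c *g k >> =
  << c * bcoef q11 q12 q21 q22 k.1 k.2 *g (k.2, k.1) >>.
Proof.
rewrite /braid msuppU; case: eqP => [->|_]; first by rewrite big_seq_fset0 mul0r monalgU0.
by rewrite big_seq_fset1 mcoeffUU.
Qed.

Lemma endo2_braidU_coef (q11 q12 q21 q22 : K) (f1 f2 : FA K) (k : word * word) u v :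
  (endo2 f1 f2 (braid q11 q12 q21 q22 << k >>))@_(u, v) =
  bcoef q11 q12 q21 q22 k.1 k.2 * ((endo f1 f2 << k.2 >>)@_u * (endo f1 f2 << k.1 >>)@_v).
Proof. by rewrite braidU endo2U mcoeffZ tens_coef mul1r. Qed.

Lemma braid_endo2U_coef (q11 q12 q21 q22 : K) (f1 f2 : FA K) (k : word * word) u v :
  (braid q11 q12 q21 q22 (endo2 f1 f2 << k >>))@_(u, v) =
  (endo f1 f2 << k.1 >>)@_v * (endo f1 f2 << k.2 >>)@_u * bcoef q11 q12 q21 q22 v u.
Proof. by rewrite braid_coef endo2U mcoeffZ tens_coef mul1r. Qed.

Lemma braid_comm_bcoef (q11 q12 q21 q22 : K) (f1 f2 : FA K) :
  (forall w, endo2 f1 f2 (braid q11 q12 q21 q22 w) =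
             braid q11 q12 q21 q22 (endo2 f1 f2 w)) ->
  forall (i j : 'I_2) u v,
  u \in msupp (if i == 0 then f1 else f2) -> v \in msupp (if j == 0 then f1 else f2) ->
  bcoef q11 q12 q21 q22 u v = bcoef q11 q12 q21 q22 (fmu i) (fmu j).
Proof.
move=> comm i j u v; rewrite -!mcoeff_neq0 => fu_neq0 fv_neq0.
have := congr1 (mcoeff (v, u)) (comm << (fmu i, fmu j) >>).
rewrite endo2_braidU_coef braid_endo2U_coef /= !endo_letter => E.
by apply: (mulfI (mulf_neq0 fu_neq0 fv_neq0)); rewrite -E mulrC [_@_v * _]mulrC.
Qed.
End Coefficients.

(** * Braiding scalars as signs *)

Definition sign_form (t : bool) (p q : bool * bool) : bool :=
  if t then (p.1 && q.1) (+) (p.2 && q.2) else (p.1 && q.2) (+) (p.2 && q.1).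

Lemma sign_formC t p q : sign_form t p q = sign_form t q p.
Proof. by case: t p q => [] [[] []] [[] []]. Qed.

Lemma sign_form_swap t p q : sign_form t (p.2, p.1) (q.2, q.1) = sign_form t p q.
Proof. by case: t p q => [] [[] []] [[] []]. Qed.

Section GramBasis.
Variables (t : bool) (p1 p2 : bool * bool).
Hypotheses (B11 : sign_form t p1 p1 = sign_form t (true, false) (true, false))
           (B12 : sign_form t p1 p2 = sign_form t (true, false) (false, true))
           (B22 : sign_form t p2 p2 = sign_form t (false, true) (false, true)).

Lemma sign_form_gram_indep :
  [&& p1 != (false, false), p2 != (false, false) & p1 != p2].
Proof. by move: B11 B12 B22; case: t p1 p2 => [] [[] []] [[] []]. Qed.

Lemma sign_form_gram_sep r r' :
  sign_form t r p1 = sign_form t r' p1 -> sign_form t r p2 = sign_form t r' p2 -> r = r'.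
Proof. by move: B11 B12 B22; case: t p1 p2 r r' => [] [[] []] [[] []] [[] []] [[] []]. Qed.
End GramBasis.

Section Signs.
Variable K : fieldType.

Lemma bcoef_sign (q11 q12 q21 q22 : K) :
  (q11, q12, q21, q22) = (-1, 1, 1, -1) \/ (q11, q12, q21, q22) = (1, -1, -1, 1) ->
  exists t, forall u v : word,
    bcoef q11 q12 q21 q22 u v = (-1) ^+ sign_form t (parity u) (parity v).
Proof.
case=> [[-> -> -> ->]|[-> -> -> ->]]; [exists true|exists false] => u v;
  rewrite /bcoef /sign_form /parity /= signr_addb -!oddM !signr_odd !expr1n.
  by rewrite !mulr1.
by rewrite mul1r mulr1.
Qed.

Lemma sign_inj (x y : bool) : (2%:R : K) != 0 -> (-1) ^+ x = (-1) ^+ y :> K -> x = y.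
Proof.
move=> two_neq0; case: x; case: y => //=; rewrite expr1 expr0 => E;
  case/eqP: two_neq0; rewrite mulr2n.
  by rewrite -{1}E addNr.
by rewrite {1}E addNr.
Qed.
End Signs.

Section AutTau.
Variables (K : fieldType) (f1 f2 : FA K).

Lemma lead_letter_eq (f : FA K) u c (l : 'I_2) :
  lead_word f u c -> u = [:: l] :> seq 'I_2 ->
  {in msupp f, forall w : word, parity w = parity u} -> f = c *: << fmu l >>.
Proof.
move=> lead ul same_par; have [_ fu _] := lead.
have -> : fmu l = u by apply: val_inj; rewrite /= fmU ul.
apply/malgP => w; rewrite mcoeffZ mcoeffU1.
case: (eqVneq u w) => [<-|ne_uw]; first by rewrite fu mulr1.
rewrite mulr0; apply: mcoeff_outdom; apply: contra ne_uw => w_f.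
have := rank_size_leq (lead_word_supp lead w_f); rewrite ul => size_w.
by rewrite fmP; apply/eqP/esym/parity_size1_inj; [|rewrite ul|exact: same_par].
Qed.

Lemma aut_image_neq0 (i : 'I_2) : is_aut f1 f2 -> (if i == 0 then f1 else f2) != 0.
Proof.
case=> g gK _; rewrite -endo_letter; apply/eqP; rewrite -(endo0 f1 f2) => /(can_inj gK).
by move/eqP; rewrite monalgU_eq0 oner_eq0.
Qed.

Lemma aut_tau_supp_parity (q11 q12 q21 q22 : K) u1 u2 :
  (2%:R : K) != 0 ->
  (q11, q12, q21, q22) = (-1, 1, 1, -1) \/ (q11, q12, q21, q22) = (1, -1, -1, 1) ->
  in_Aut_tau q11 q12 q21 q22 f1 f2 -> u1 \in msupp f1 -> u2 \in msupp f2 ->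
  [/\ parity_indep u1 u2, {in msupp f1, forall w : word, parity w = parity u1}
    & {in msupp f2, forall w : word, parity w = parity u2}].
Proof.
move=> two_neq0 q_tau [_ comm] u1_f1 u2_f2; have [t bsign] := bcoef_sign q_tau.
have B (i j : 'I_2) u v : u \in msupp (if i == 0 then f1 else f2) ->
    v \in msupp (if j == 0 then f1 else f2) ->
    sign_form t (parity u) (parity v) = sign_form t (parity [:: i]) (parity [:: j]).
  move=> u_fi v_fj; apply: (sign_inj two_neq0); rewrite -bsign.
  have := bsign (fmu i) (fmu j); rewrite !fmU => <-.
  exact: braid_comm_bcoef comm i j u v u_fi v_fj.
have B11 := B 0 0 _ _ u1_f1 u1_f1; have B12 := B 0 1 _ _ u1_f1 u2_f2.
have B22 := B 1 1 _ _ u2_f2 u2_f2.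
split; first exact: sign_form_gram_indep B11 B12 B22.
  move=> w w_f1; apply: (sign_form_gram_sep B11 B12 B22).
    by rewrite (B 0 0 _ _ w_f1 u1_f1) B11.
  by rewrite (B 0 1 _ _ w_f1 u2_f2) B12.
move=> w w_f2; apply: (sign_form_gram_sep B11 B12 B22).
  by rewrite sign_formC (B 0 1 _ _ u1_f1 w_f2) -B12 sign_formC.
by rewrite (B 1 1 _ _ w_f2 u2_f2) B22.
Qed.

(* Each letter x_k is the image of some p != 0, whose leading word is substituted to a
   single letter; since u1, u2 form a code this forces one of them to be [:: k]. *)
Lemma aut_lead_letters u1 u2 c1 c2 : is_aut f1 f2 ->
  lead_word f1 u1 c1 -> lead_word f2 u2 c2 -> parity_indep u1 u2 ->
  (u1 = [:: 0] :> seq 'I_2 /\ u2 = [:: 1] :> seq 'I_2) \/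
  (u1 = [:: 1] :> seq 'I_2 /\ u2 = [:: 0] :> seq 'I_2).
Proof.
case=> g _ gK lead1 lead2 ind.
have letter (k : 'I_2) : exists i : 'I_2, (if i == 0 then u1 else u2) = [:: k] :> seq 'I_2.
  have p_neq0 : g << fmu k >> != 0.
    apply/eqP => p0; move: (gK << fmu k >>); rewrite p0 endo0 => /eqP.
    by rewrite eq_sym monalgU_eq0 oner_eq0.
  have [m [c lead]] := lead_word_endo lead1 lead2 (wsubst_inj ind) p_neq0.
  rewrite gK in lead; have /(congr1 val) := lead_word_uniq lead (lead_wordU _ (fmu k)).
  by rewrite /= fmU => /(wsubst_letter ind)[i [_ ui]]; exists i; case: (i == 0) ui.
have [i ui] := letter 0; have [j uj] := letter 1.
case: (ord2_cases i) (ord2_cases j) ui uj => -> [] -> /= ui uj; [|by left|by right|];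
  by rewrite ui in uj.
Qed.

Lemma aut_tau_G3 (q11 q12 q21 q22 : K) : (2%:R : K) != 0 ->
  (q11, q12, q21, q22) = (-1, 1, 1, -1) \/ (q11, q12, q21, q22) = (1, -1, -1, 1) ->
  in_Aut_tau q11 q12 q21 q22 f1 f2 -> in_G3 f1 f2.
Proof.
move=> two_neq0 q_tau aut_tau; have [aut _] := aut_tau; split => //.
have [u1 lead1] := lead_word_exists (aut_image_neq0 0 aut).
have [u2 lead2] := lead_word_exists (aut_image_neq0 1 aut).
have [c1_neq0 _ _] := lead1; have [c2_neq0 _ _] := lead2.
have [ind par1 par2] : [/\ parity_indep u1 u2,
    {in msupp f1, forall w : word, parity w = parity u1}
    & {in msupp f2, forall w : word, parity w = parity u2}].
  have u1_f1 : u1 \in msupp f1 by rewrite -mcoeff_neq0.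
  have u2_f2 : u2 \in msupp f2 by rewrite -mcoeff_neq0.
  exact: (aut_tau_supp_parity two_neq0 q_tau aut_tau u1_f1 u2_f2).
case: (aut_lead_letters aut lead1 lead2 ind) => [[u10 u21]|[u11 u20]];
  [left|right]; exists f1@_u1, f2@_u2; split => //.
- exact: lead_letter_eq lead1 u10 par1.
- exact: lead_letter_eq lead2 u21 par2.
- exact: lead_letter_eq lead1 u11 par1.
- exact: lead_letter_eq lead2 u20 par2.
Qed.
End AutTau.

(** * Diagonal and antidiagonal automorphisms *)

Definition relabel (s : 'I_2 -> 'I_2) (u : word) : word := FMonom (map s u).

Lemma relabelK s : involutive s -> involutive (relabel s).
Proof.
by move=> sK u; apply: val_inj; rewrite /= -map_comp map_id_in // => i _; exact: sK.
Qed.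

Lemma scaleU (K : fieldType) c (u : word) : c *: (<< u >> : FA K) = << c *g u >>.
Proof. by apply/malgP => w; rewrite mcoeffZ mcoeffU1 mcoeffU mulr_natr. Qed.

Section MonomialEndo.
Variables (K : fieldType) (f1 f2 : FA K) (s : 'I_2 -> 'I_2) (c : 'I_2 -> K).
Hypotheses (sK : involutive s)
           (f_def : forall i, (if i == 0 then f1 else f2) = c i *: gen K (s i)).

Let C (u : word) := \prod_(i <- (u : seq 'I_2)) c i.

Lemma endo_monomial u : endo f1 f2 << u >> = << C u *g relabel s u >>.
Proof.
rewrite endoU /C /relabel; elim: (u : seq 'I_2) => [|i l IH].
  rewrite !big_nil; apply/malgP => k; rewrite mcoeff1 mcoeffU eq_sym.
  by congr (_ *+ (_ == k)); apply/eqP; rewrite fmP fm1.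
rewrite !big_cons IH f_def /gen scaleU malgM_def fgmulUU; congr << _ *g _ >>.
by apply/eqP; rewrite fmP fmM fmU.
Qed.

Lemma endo2_monomial_coef (w : FA2 K) u v : (endo2 f1 f2 w)@_(u, v) =
  w@_(relabel s u, relabel s v) * (C (relabel s u) * C (relabel s v)).
Proof.
have relabel_eq a b : (relabel s a == b) = (a == relabel s b).
  by apply/eqP/eqP => [<-|->]; rewrite relabelK.
rewrite endo2_coef (eq_bigr (fun k => if k == (relabel s u, relabel s v) then
    w@_(relabel s u, relabel s v) * (C (relabel s u) * C (relabel s v)) else 0)).
  rewrite sum_seq_delta ?fset_uniq //.
  by case: (boolP (_ \in msupp w)) => [_|/mcoeff_outdom ->]; rewrite ?mul0r.
case=> [k1 k2] _ /=; rewrite !endo_monomial !mcoeffU xpair_eqE !relabel_eq.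
by case: (eqVneq k1 (relabel s u)) => [->|_]; case: (eqVneq k2 (relabel s v)) => [->|_];
  rewrite /= ?(mulr1n, mulr0n, mulr0, mul0r).
Qed.

Lemma monomial_braid_comm (q11 q12 q21 q22 : K) :
  (forall u v,
    bcoef q11 q12 q21 q22 (relabel s u) (relabel s v) = bcoef q11 q12 q21 q22 u v) ->
  forall w, endo2 f1 f2 (braid q11 q12 q21 q22 w) = braid q11 q12 q21 q22 (endo2 f1 f2 w).
Proof.
move=> bcoef_relabel w; apply/malgP => [[u v]].
by rewrite endo2_monomial_coef !braid_coef endo2_monomial_coef bcoef_relabel; ring.
Qed.
End MonomialEndo.

Lemma G3_aut_tau (K : fieldType) (q11 q12 q21 q22 : K) (f1 f2 : FA K) :
  (q11, q12, q21, q22) = (-1, 1, 1, -1) \/ (q11, q12, q21, q22) = (1, -1, -1, 1) ->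
  in_G3 f1 f2 -> in_Aut_tau q11 q12 q21 q22 f1 f2.
Proof.
move=> q_tau [aut G3f]; split; first exact: aut.
case: G3f => [[a1 [b2 [_ _ e1 e2]]] | [b1 [a2 [_ _ e1 e2]]]].
  apply: (monomial_braid_comm (s := id) (c := fun i => if i == 0 then a1 else b2)).
  - by [].
  - by move=> i; case: (ord2_cases i) => -> /=; [rewrite e1 | rewrite e2]; reflexivity.
  - by move=> u v; congr bcoef; apply: val_inj; rewrite /= map_id.
have rev0 : rev_ord 0 = 1 :> 'I_2 by apply: val_inj.
have rev1 : rev_ord 1 = 0 :> 'I_2 by apply: val_inj.
apply: (monomial_braid_comm (s := @rev_ord 2) (c := fun i => if i == 0 then b1 else a2)).
- exact: rev_ordK.
- by move=> i; case: (ord2_cases i) => -> /=; [rewrite e1 rev0 | rewrite e2 rev1]; reflexivity.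
- have [t bsign] := bcoef_sign q_tau.
  by move=> u v; rewrite !bsign !parity_rev_ord sign_form_swap.
Qed.

Theorem lemma4 (K : fieldType) (q11 q12 q21 q22 : K) :
  (2%N \notin [pchar K]) ->
  ((q11, q12, q21, q22) = (-1, 1, 1, -1) \/ (q11, q12, q21, q22) = (1, -1, -1, 1)) ->
  forall f1 f2 : FA K, in_Aut_tau q11 q12 q21 q22 f1 f2 <-> in_G3 f1 f2.
Proof.
move=> not_pchar2 q_tau f1 f2.
have two_neq0 : (2%:R : K) != 0 by move: not_pchar2; rewrite inE.
by split; [exact: aut_tau_G3 | exact: G3_aut_tau].
Qed.
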